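(* Let $\mathbf{S}$ be a strong quasi-Wajsberg* algebra. Then there exist a Wajsberg* algebra $\mathbf{M}$ and a flat strong quasi-Wajsberg* algebra $\mathbf{FW^*}$ such that $\mathbf{S}$ can be embedded (by an injective homomorphism) into the direct product $\mathbf{M}\times\mathbf{FW^*}$.
   Context: A quasi-Wajsberg* algebra is an algebra $\langle W;\to,\neg,{}^+,{}^-,1\rangle$ of type $\langle 2,1,1,1,0\rangle$ (${}^+,{}^-$ bind more tightly than $\neg$, which binds more tightly than $\to$) such that for all $x,y,z$: (1) $x\to y=\neg y\to\neg x$; (2) $(x\to 1)\to((y\to 1)\to z)=(y\to 1)\to((x\to 1)\to z)$; (3) $(1\to x)\to 1=1$; (4) $(z\to z)\to(x\to y)=x\to y$; (5) $(1\to 1)\to x^{+}=((1\to 1)\to x)^{+}=(x\to 1)\to 1$ and $(1\to 1)\to x^{-}=((1\to 1)\to x)^{-}=(x\to\neg 1)\to\neg 1$; (6) $x\to y=(y^{+}\to x^{-})\to(x^{+}\to y^{-})$; (7) $\neg(x\to y)=y\to x$; (8) $\neg\neg x=x$; (9) $(x\to(\neg x\to y))^{+}=x^{+}\to(\neg x^{+}\to y^{+})$; (10) $x\vee y=y\vee x$; (11) $x\vee(y\vee z)=(x\vee y)\vee z$; (12) $x\to(y\vee z)=(x\to y)\vee(x\to z)$; where $x\vee y:=((x^{+}\to y^{+})^{+}\to(\neg x)^{-})\to((y^{-}\to x^{-})^{-}\to x^{-})$. It is strong if $x^+=(1\to 1)\to x^+$ and $x^-=(1\to 1)\to x^-$ for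 all $x$, and flat if $1\to 1=1$. A Wajsberg* algebra is an algebra $\langle M;\to,\neg,1\rangle$ of type $\langle 2,1,0\rangle$ such that, with $x^+:=(x\to 1)\to 1$, $x^-:=(x\to\neg 1)\to\neg 1$ and $\vee$ defined by the same formula, for all $x,y,z$: $x\to y=\neg y\to\neg x$; $(x\to 1)\to((y\to 1)\to z)=(y\to 1)\to((x\to 1)\to z)$; $(1\to x)\to 1=1$; $(y\to y)\to x=x$; $x\to y=(y^+\to x^-)\to(x^+\to y^-)$; $\neg(x\to y)=y\to x$; $\neg\neg x=x$; $(x\to(\neg x\to y))^+=x^+\to(\neg x^+\to y^+)$; $x\vee y=y\vee x$; $x\vee(y\vee z)=(x\vee y)\vee z$; $x\to(y\vee z)=(x\to y)\vee(x\to z)$. A Wajsberg* algebra is regarded as an algebra in the language $\langle\to,\neg,{}^+,{}^-,1\rangle$ with these defined ${}^+,{}^-$; direct products have coordinatewise operations and homomorphisms preserve $\to,\neg,{}^+,{}^-,1$. *)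

Record qw_sig := QWSig {
  qcar : Type;
  qimp : qcar -> qcar -> qcar;
  qneg : qcar -> qcar;
  qplus : qcar -> qcar;
  qminus : qcar -> qcar;
  qone : qcar
}.

Definition gjoin {A : Type} (imp : A -> A -> A) (neg plus minus : A -> A)
  (x y : A) : A :=
  imp (imp (plus (imp (plus x) (plus y))) (minus (neg x)))
      (imp (minus (imp (minus y) (minus x))) (minus x)).

Definition is_quasi_wajsberg_star (W : qw_sig) : Prop :=
  let imp := qimp W in let neg := qneg W in let pl := qplus W in
  let mi := qminus W in let one := qone W in
  let join := gjoin imp neg pl mi in
  (forall x y, imp x y = imp (neg y) (neg x)) /\
  (forall x y z, imp (imp x one) (imp (imp y one) z)
                 = imp (imp y one) (imp (imp x one) z)) /\
  (forall x, imp (imp one x) one = one) /\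
  (forall x y z, imp (imp z z) (imp x y) = imp x y) /\
  (forall x, imp (imp one one) (pl x) = pl (imp (imp one one) x) /\
             pl (imp (imp one one) x) = imp (imp x one) one) /\
  (forall x, imp (imp one one) (mi x) = mi (imp (imp one one) x) /\
             mi (imp (imp one one) x) = imp (imp x (neg one)) (neg one)) /\
  (forall x y, imp x y = imp (imp (pl y) (mi x)) (imp (pl x) (mi y))) /\
  (forall x y, neg (imp x y) = imp y x) /\
  (forall x, neg (neg x) = x) /\
  (forall x y, pl (imp x (imp (neg x) y)) = imp (pl x) (imp (neg (pl x)) (pl y))) /\
  (forall x y, join x y = join y x) /\
  (forall x y z, join x (join y z) = join (join x y) z) /\
  (forall x y z, imp x (join y z) = join (imp x y) (imp x z)).

Definition qw_strong (W : qw_sig) : Prop :=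
  forall x, qplus W x = qimp W (qimp W (qone W) (qone W)) (qplus W x) /\
            qminus W x = qimp W (qimp W (qone W) (qone W)) (qminus W x).

Definition qw_flat (W : qw_sig) : Prop :=
  qimp W (qone W) (qone W) = qone W.

Record w_sig := WSig {
  wcar : Type;
  wimp : wcar -> wcar -> wcar;
  wneg : wcar -> wcar;
  wone : wcar
}.

Definition wplus (M : w_sig) (x : wcar M) : wcar M :=
  wimp M (wimp M x (wone M)) (wone M).
Definition wminus (M : w_sig) (x : wcar M) : wcar M :=
  wimp M (wimp M x (wneg M (wone M))) (wneg M (wone M)).

Definition is_wajsberg_star (M : w_sig) : Prop :=
  let imp := wimp M in let neg := wneg M in let pl := wplus M in
  let mi := wminus M in let one := wone M in
  let join := gjoin imp neg pl mi in
  (forall x y, imp x y = imp (neg y) (neg x)) /\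
  (forall x y z, imp (imp x one) (imp (imp y one) z)
                 = imp (imp y one) (imp (imp x one) z)) /\
  (forall x, imp (imp one x) one = one) /\
  (forall x y, imp (imp y y) x = x) /\
  (forall x y, imp x y = imp (imp (pl y) (mi x)) (imp (pl x) (mi y))) /\
  (forall x y, neg (imp x y) = imp y x) /\
  (forall x, neg (neg x) = x) /\
  (forall x y, pl (imp x (imp (neg x) y)) = imp (pl x) (imp (neg (pl x)) (pl y))) /\
  (forall x y, join x y = join y x) /\
  (forall x y z, join x (join y z) = join (join x y) z) /\
  (forall x y z, imp x (join y z) = join (imp x y) (imp x z)).

Definition w_as_qw (M : w_sig) : qw_sig :=
  QWSig (wcar M) (wimp M) (wneg M) (wplus M) (wminus M) (wone M).

Definition qw_prod (A B : qw_sig) : qw_sig :=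
  QWSig (qcar A * qcar B)
    (fun x y => (qimp A (fst x) (fst y), qimp B (snd x) (snd y)))
    (fun x => (qneg A (fst x), qneg B (snd x)))
    (fun x => (qplus A (fst x), qplus B (snd x)))
    (fun x => (qminus A (fst x), qminus B (snd x)))
    (qone A, qone B).

Definition qw_hom (A B : qw_sig) (f : qcar A -> qcar B) : Prop :=
  (forall x y, f (qimp A x y) = qimp B (f x) (f y)) /\
  (forall x, f (qneg A x) = qneg B (f x)) /\
  (forall x, f (qplus A x) = qplus B (f x)) /\
  (forall x, f (qminus A x) = qminus B (f x)) /\
  f (qone A) = qone B.

Definition qw_embedding (A B : qw_sig) (f : qcar A -> qcar B) : Prop :=
  qw_hom A B f /\ (forall x y, f x = f y -> x = y).

(* Call x regular when (1 -> 1) -> x = x.  In a strong algebra the map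
   x |-> (1 -> 1) -> x is a homomorphism onto the regular elements, and these
   form a Wajsberg* algebra.  The map forgets only which non-regular element x
   was.  That is recorded in the flat algebra on S plus one new element, in
   which every operation except negation is constantly the new element:
   sending regular elements to it and the others to themselves is again a
   homomorphism, because implications, x^+, x^- and 1 are regular.  The pair of
   maps is injective since a regular x equals (1 -> 1) -> x. *)

From Stdlib Require Import ProofIrrelevance ClassicalDescription.

Definition qw_regular (S : qw_sig) (x : qcar S) : Prop :=
  qimp S (qimp S (qone S) (qone S)) x = x.

Lemma qw_hom_pair (A B C : qw_sig) (f : qcar A -> qcar B) (g : qcar A -> qcar C) :
  qw_hom A B f -> qw_hom A C g ->
  qw_hom A (qw_prod B C) (fun x => (f x, g x)).
Proof.
  intros (f_imp & f_neg & f_plus & f_minus & f_one)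
         (g_imp & g_neg & g_plus & g_minus & g_one).
  repeat split; intros; simpl; congruence.
Qed.

Definition flat_option (T : Type) (n : T -> T) : qw_sig :=
  QWSig (option T) (fun _ _ => None) (option_map n)
    (fun _ => None) (fun _ => None) None.

Lemma flat_option_qw (T : Type) (n : T -> T) :
  (forall x, n (n x) = x) ->
  is_quasi_wajsberg_star (flat_option T n) /\
  qw_strong (flat_option T n) /\ qw_flat (flat_option T n).
Proof.
  intro n_invol.
  repeat split; intros; simpl; try reflexivity.
  destruct x as [x|]; simpl; now rewrite ?n_invol.
Qed.

Section RegularPart.

Variable S : qw_sig.
Hypothesis HS : is_quasi_wajsberg_star S.

Local Notation imp := (qimp S).
Local Notation neg := (qneg S).
Local Notation one := (qone S).
Local Notation e := (imp one one).

Lemma qw_neg_neg x : neg (neg x) = x.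
Proof. destruct HS as (_&_&_&_&_&_&_&_&neg_neg&_). apply neg_neg. Qed.

Lemma qw_regular_imp x y : qw_regular S (imp x y).
Proof. destruct HS as (_&_&_&reg&_). apply reg. Qed.

Lemma qw_regular_one : qw_regular S one.
Proof. destruct HS as (_&_&one_absorb&_). apply one_absorb. Qed.

Lemma qw_imp_e_neg x : imp e (neg x) = neg (imp e x).
Proof.
  destruct HS as (contra&_&_&_&_&_&_&neg_imp&_).
  now rewrite neg_imp, (contra x), neg_imp.
Qed.

Lemma qw_regular_neg x : qw_regular S x -> qw_regular S (neg x).
Proof. unfold qw_regular; intro x_reg. now rewrite qw_imp_e_neg, x_reg. Qed.

Lemma qw_regular_negE x : qw_regular S (neg x) <-> qw_regular S x.
Proof.
  split; [|apply qw_regular_neg].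
  intro nx_reg. rewrite <- (qw_neg_neg x). now apply qw_regular_neg.
Qed.

Hypothesis Hst : qw_strong S.

Lemma qw_regular_plus x : qw_regular S (qplus S x).
Proof. symmetry. apply Hst. Qed.

Lemma qw_regular_minus x : qw_regular S (qminus S x).
Proof. symmetry. apply Hst. Qed.

Lemma qw_imp_e_plus x : imp e (qplus S x) = qplus S (imp e x).
Proof. destruct HS as (_&_&_&_&plus_e&_). apply plus_e. Qed.

Lemma qw_imp_e_minus x : imp e (qminus S x) = qminus S (imp e x).
Proof. destruct HS as (_&_&_&_&_&minus_e&_). apply minus_e. Qed.

Lemma qw_plusE x : qplus S x = imp (imp x one) one.
Proof.
  destruct HS as (_&_&_&_&plus_e&_).
  rewrite <- (qw_regular_plus x). now destruct (plus_e x) as [-> ->].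
Qed.

Lemma qw_minusE x : qminus S x = imp (imp x (neg one)) (neg one).
Proof.
  destruct HS as (_&_&_&_&_&minus_e&_).
  rewrite <- (qw_regular_minus x). now destruct (minus_e x) as [-> ->].
Qed.

Lemma qw_plus_imp_e x : qplus S (imp e x) = qplus S x.
Proof. now rewrite <- qw_imp_e_plus, qw_regular_plus. Qed.

Lemma qw_minus_imp_e x : qminus S (imp e x) = qminus S x.
Proof. now rewrite <- qw_imp_e_minus, qw_regular_minus. Qed.

(* By axiom (6), x -> y only depends on x^+, x^-, y^+ and y^-, which do not
   change under x |-> e -> x. *)
Lemma qw_imp_e_imp x y : imp e (imp x y) = imp (imp e x) (imp e y).
Proof.
  destruct HS as (_&_&_&_&_&_&decomp&_).
  rewrite qw_regular_imp, (decomp (imp e x)).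
  now rewrite !qw_plus_imp_e, !qw_minus_imp_e, <- decomp.
Qed.

Definition regular_elt := {x : qcar S | qw_regular S x}.

Definition regular_alg : w_sig :=
  WSig regular_elt
    (fun a b => exist _ (imp (proj1_sig a) (proj1_sig b)) (qw_regular_imp _ _))
    (fun a => exist _ (neg (proj1_sig a)) (qw_regular_neg _ (proj2_sig a)))
    (exist _ one qw_regular_one).

Lemma regular_elt_inj (a b : regular_elt) : proj1_sig a = proj1_sig b -> a = b.
Proof. apply eq_sig_hprop; intros; apply proof_irrelevance. Qed.

Lemma regular_wimpE (a b : regular_elt) :
  proj1_sig (wimp regular_alg a b) = imp (proj1_sig a) (proj1_sig b).
Proof. reflexivity. Qed.

Lemma regular_wnegE (a : regular_elt) :
  proj1_sig (wneg regular_alg a) = neg (proj1_sig a).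
Proof. reflexivity. Qed.

Lemma regular_woneE : proj1_sig (wone regular_alg) = one.
Proof. reflexivity. Qed.

Lemma regular_wplusE (a : regular_elt) :
  proj1_sig (wplus regular_alg a) = qplus S (proj1_sig a).
Proof. symmetry. apply qw_plusE. Qed.

Lemma regular_wminusE (a : regular_elt) :
  proj1_sig (wminus regular_alg a) = qminus S (proj1_sig a).
Proof. symmetry. apply qw_minusE. Qed.

Lemma regular_joinE (a b : regular_elt) :
  proj1_sig (gjoin (wimp regular_alg) (wneg regular_alg) (wplus regular_alg)
               (wminus regular_alg) a b)
  = gjoin imp neg (qplus S) (qminus S) (proj1_sig a) (proj1_sig b).
Proof.
  unfold gjoin.
  now repeat rewrite ?regular_wimpE, ?regular_wnegE, ?regular_wplusE, ?regular_wminusE.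
Qed.

Lemma regular_alg_wajsberg : is_wajsberg_star regular_alg.
Proof.
  destruct HS as (contra & ex12 & one_absorb & reg & _ & _ & decomp & neg_imp &
                  neg_neg & plus_imp & join_comm & join_assoc & imp_join).
  repeat split; intros; apply regular_elt_inj;
    repeat rewrite ?regular_joinE, ?regular_wimpE, ?regular_wnegE,
                   ?regular_woneE, ?regular_wplusE, ?regular_wminusE;
    auto.
  destruct x as [x x_reg]; simpl. rewrite <- x_reg. apply reg.
Qed.

Definition regular_part (x : qcar S) : regular_elt :=
  exist _ (imp e x) (qw_regular_imp e x).

Lemma regular_part_hom : qw_hom S (w_as_qw regular_alg) regular_part.
Proof.
  repeat split; intros; apply regular_elt_inj;
    cbn [qimp qneg qplus qminus qone w_as_qw regular_part proj1_sig].
  - apply qw_imp_e_imp.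
  - apply qw_imp_e_neg.
  - now rewrite regular_wplusE, qw_imp_e_plus.
  - now rewrite regular_wminusE, qw_imp_e_minus.
  - apply qw_regular_one.
Qed.

Definition irregular_part (x : qcar S) : option (qcar S) :=
  if excluded_middle_informative (qw_regular S x) then None else Some x.

Lemma irregular_part_regular x : qw_regular S x -> irregular_part x = None.
Proof.
  unfold irregular_part; intro x_reg.
  now destruct excluded_middle_informative.
Qed.

Lemma irregular_part_neg x :
  irregular_part (neg x) = option_map neg (irregular_part x).
Proof.
  unfold irregular_part.
  destruct (excluded_middle_informative (qw_regular S (neg x)));
  destruct (excluded_middle_informative (qw_regular S x));
    rewrite ?qw_regular_negE in *; tauto.
Qed.

Lemma irregular_part_hom :
  qw_hom S (flat_option (qcar S) neg) irregular_part.
Proof.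
  repeat split; intros; simpl.
  - apply irregular_part_regular, qw_regular_imp.
  - apply irregular_part_neg.
  - apply irregular_part_regular, qw_regular_plus.
  - apply irregular_part_regular, qw_regular_minus.
  - apply irregular_part_regular, qw_regular_one.
Qed.

Lemma imp_e_irregular_part_inj x y :
  imp e x = imp e y -> irregular_part x = irregular_part y -> x = y.
Proof.
  intros reg_eq irreg_eq.
  unfold irregular_part in irreg_eq.
  destruct (excluded_middle_informative (qw_regular S x)) as [x_reg|];
  destruct (excluded_middle_informative (qw_regular S y)) as [y_reg|];
    try discriminate.
  - now rewrite <- x_reg, <- y_reg.
  - congruence.
Qed.

End RegularPart.

Theorem corollary3p2 (S : qw_sig) :
  is_quasi_wajsberg_star S -> qw_strong S ->
  exists (M : w_sig) (F : qw_sig),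
    is_wajsberg_star M /\
    is_quasi_wajsberg_star F /\ qw_strong F /\ qw_flat F /\
    exists f : qcar S -> qcar (qw_prod (w_as_qw M) F),
      qw_embedding S (qw_prod (w_as_qw M) F) f.
Proof.
  intros HS Hst.
  exists (regular_alg S HS), (flat_option (qcar S) (qneg S)).
  destruct (flat_option_qw (qcar S) (qneg S) (qw_neg_neg S HS))
    as (F_qw & F_strong & F_flat).
  split; [exact (regular_alg_wajsberg S HS Hst)|].
  split; [exact F_qw|]. split; [exact F_strong|]. split; [exact F_flat|].
  exists (fun x => (regular_part S HS x, irregular_part S x)).
  split.
  - apply qw_hom_pair.
    + exact (regular_part_hom S HS Hst).
    + exact (irregular_part_hom S HS Hst).
  - intros x y fxy. injection fxy as reg_eq irreg_eq.
    exact (imp_e_irregular_part_inj S x y reg_eq irreg_eq).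
Qed.
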